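(* Every graph $G$ satisfies $\mathrm{cop}(G)\le \mathrm{circ}(G)/2$, where $\mathrm{circ}(G)$ is the circumference of $G$.
   Context: All graphs are finite, undirected, without loops or multiple edges. The circumference $\mathrm{circ}(G)$ of a graph is the length of its longest cycle, or $+\infty$ if it has no cycle. Cops and Robber game on a connected graph: for an integer $k\ge 1$, the cop player places $k$ cops on (not necessarily distinct) vertices, then the robber is placed on a vertex; then, starting with the cops, the players alternate moves. In a cop move, each cop either stays or moves to an adjacent vertex; in a robber move, the robber stays or moves to an adjacent vertex. The cops win if at some point a cop and the robber occupy the same vertex. Both players have complete information. The cop number $\mathrm{cop}(G)$ of a connected graph $G$ is the smallest $k$ such that the cops have a winning strategy with $k$ cops; for a non-connected graph it is the maximum cop number of its connected components. *)

From mathcomp Require Import all_boot.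
From Stdlib Require Import ClassicalEpsilon.
Set Implicit Arguments. Unset Strict Implicit. Unset Printing Implicit Defensive.

Section Graphs.
Variable T : finType.
Variable e : rel T. (* simple graph: assumed symmetric and irreflexive *)

Definition has_cycle_of_length (n : nat) : Prop :=
  exists c : seq T, [/\ size c = n, 3 <= n, uniq c & cycle e c].

(* n is the circumference: the length of a longest cycle (only meaningful
   when G has a cycle; otherwise circ(G) = +oo and no n qualifies). *)
Definition is_circumference (n : nat) : Prop :=
  has_cycle_of_length n /\ (forall m, has_cycle_of_length m -> m <= n).

(* Cops and Robber with k cops.  cops_force C r : it is the cops' turn,
   cops are at positions C, robber at r, and the cops can force a capture
   in finitely many moves (whatever the robber does). *)
Inductive cops_force (k : nat) : {ffun 'I_k -> T} -> T -> Prop :=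
| cf_capture (C : {ffun 'I_k -> T}) (r : T) : (exists i, C i = r) -> cops_force C r
| cf_move (C : {ffun 'I_k -> T}) (r : T) (C' : {ffun 'I_k -> T}) :
    (forall i, C' i = C i \/ e (C i) (C' i)) ->
    ((exists i, C' i = r) \/
     (forall r' : T, r' = r \/ e r r' -> cops_force C' r')) ->
    cops_force C r.

Definition cops_win (S : {set T}) (k : nat) : Prop :=
  exists C : {ffun 'I_k -> T}, (forall i, C i \in S) /\
    (forall r, r \in S -> cops_force C r).

Definition component (x : T) : {set T} := [set y | connect e x y].

Definition is_least_win (S : {set T}) (k : nat) : Prop :=
  1 <= k /\ cops_win S k /\ (forall j, 1 <= j -> cops_win S j -> k <= j).

Definition cop_number_conn (S : {set T}) : nat :=
  epsilon (inhabits 0%N) (is_least_win S).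

(* cop number of G: maximum over connected components (0 for the empty graph) *)
Definition cop_number : nat := \max_(x : T) cop_number_conn (component x).

End Graphs.

From mathcomp Require Import all_boot zify.
From Stdlib Require Import Classical ClassicalEpsilon.
Set Implicit Arguments. Unset Strict Implicit. Unset Printing Implicit Defensive.

(** The cops guard a path [v_0 ... v_t] that grows by one vertex per round,
  the new head being chosen in the robber's component of [G - {v_0,...,v_t}],
  so the robber's territory strictly shrinks.  If the robber ever touches a
  path vertex [v_j], the path from [v_j] to the head followed by a path back
  through the robber's component is a cycle of length [> t + 1 - j]; hence
  only the last [circ(G) - 1] path vertices are exposed, and cops posted at
  every third of them (at most [circ(G)/2] cops) capture the robber one move
  later. *)

Section Avoiding.
Variables (T : finType) (e : rel T).

Definition avoiding (s : seq T) : rel T :=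
  [rel a b | [&& e a b, a \notin s & b \notin s]].

Lemma avoiding_nil : avoiding [::] =2 e.
Proof. by move=> a b; rewrite /avoiding /= andbT. Qed.

Lemma path_avoiding_notin s x p :
  path (avoiding s) x p -> all (fun z => z \notin s) p.
Proof. by elim: p x => //= y p IH x /andP[/and3P[_ _ ->] /IH]. Qed.

Lemma connect_avoiding_notin s a b :
  connect (avoiding s) a b -> a \notin s -> b \notin s.
Proof.
move=> /connectP[p pp ->] an.
have := mem_last a p; rewrite inE => /predU1P[-> //|].
exact: (allP (path_avoiding_notin pp)).
Qed.

Lemma path_avoiding_rcons s v x p :
  path (avoiding s) x p -> v \notin x :: p -> path (avoiding (rcons s v)) x p.
Proof.
elim: p x => //= y p IH x /andP[/and3P[exy xs ys] pp].
rewrite !inE !negb_or => /and3P[vx vy vp].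
rewrite IH ?inE ?negb_or ?vy ?vp // andbT /avoiding /= exy !mem_rcons !inE !negb_or.
by rewrite (negbTE xs) (negbTE ys) eq_sym vx eq_sym vy.
Qed.

Lemma connect_avoiding_step P v r :
  connect (avoiding P) v r -> r != v ->
  exists w, [/\ e v w, w \notin rcons P v & connect (avoiding (rcons P v)) w r].
Proof.
move=> /connectP[p pp ->{r}].
case: (shortenP pp) => -[|w p'] pp' up' _; first by rewrite eqxx.
move: pp' up' => /= /andP[/and3P[evw _ wP] pw] /andP[].
rewrite inE negb_or => /andP[vw vp'] _ _.
exists w; split=> //; first by rewrite mem_rcons inE negb_or eq_sym vw.
by apply/connectP; exists p' => //; apply: path_avoiding_rcons; rewrite // inE negb_or vw.
Qed.

Lemma sorted_rcons s x y :
  sorted e (rcons s x) -> e x y -> sorted e (rcons (rcons s x) y).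
Proof.
case: s => [|a s] /=; first by rewrite andbT.
by move=> sx exy; rewrite rcons_path sx last_rcons.
Qed.

(* The cycle is [Q_j ... Q_last v] followed by a loop-free route from [v] back to [x],
   a neighbour of [Q_j] outside [Q]. *)
Lemma chord_cycle Q v x j :
  uniq (rcons Q v) -> sorted e (rcons Q v) -> connect (avoiding Q) v x ->
  j < size Q -> e x (nth v Q j) ->
  exists c, [/\ uniq c, cycle e c & size Q - j < size c].
Proof.
move=> uQ sQ /connectP[p pp ->] jQ exy.
case: (shortenP pp) => p' pp' up' _ in exy *.
have pe : path e v p' by apply: sub_path pp' => a b /and3P[].
have p'Q := path_avoiding_notin pp'.
set y := nth v Q j in exy; set D := drop j.+1 Q.
have eQ : Q = take j Q ++ y :: D by rewrite /y /D -drop_nth // cat_take_drop.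
exists (y :: D ++ v :: p'); split.
- rewrite -cat1s catA cat1s -drop_nth // -cat_rcons -drop_rcons; last exact: ltnW.
  rewrite cat_uniq drop_uniq //=; move: up' => /= /andP[vp' ->]; rewrite andbT.
  apply/hasPn => z zp'; apply/negP => /mem_drop.
  rewrite mem_rcons inE => /predU1P[zv|zQ]; first by move: vp'; rewrite -zv zp'.
  by move: (allP p'Q z zp'); rewrite zQ.
- rewrite /= rcons_path cat_path /= pe last_cat /= exy !andbT.
  have : sorted e (take j Q ++ y :: rcons D v) by rewrite -rcons_cons -rcons_cat -eQ.
  by case/cat_sorted2 => _ /=; rewrite rcons_path.
- by rewrite /= size_cat /= /D size_drop; lia.
Qed.

End Avoiding.

Section GuardingPath.
Variables (T : finType) (e : rel T).
Hypothesis e_sym : symmetric e.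
Variable n : nat.
Hypothesis n_gt2 : 2 < n.
Hypothesis cycle_le : forall m, has_cycle_of_length e m -> m <= n.
Variable k : nat.
Hypothesis n_le_3k : n <= 3 * k.

Lemma chord_dist_lt Q v x j :
  uniq (rcons Q v) -> sorted e (rcons Q v) -> connect (avoiding e Q) v x ->
  j < size Q -> e x (nth v Q j) -> size Q - j < n.
Proof.
move=> uQ sQ vx jQ exy; have [c [uc cc jc]] := chord_cycle uQ sQ vx jQ exy.
have [c3|] := leqP 3 (size c); last lia.
exact/(leq_trans jc)/cycle_le/(ex_intro _ c (And4 erefl c3 uc cc)).
Qed.

(* Cop [i] stands [3 i + 1] steps behind the head [v]; the truncated
   subtraction parks the cops that do not fit on the first path vertex. *)
Definition guard (P : seq T) (v : T) : {ffun 'I_k -> T} :=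
  [ffun i : 'I_k => nth v (rcons P v) (size P - (3 * i).+1)].

Lemma cops_force_near (C : {ffun 'I_k -> T}) r (i : 'I_k) :
  C i = r \/ e (C i) r -> cops_force e C r.
Proof.
case=> [Cir|Cir]; first by apply: cf_capture; exists i.
apply: (@cf_move _ _ _ _ _ [ffun l => if l == i then r else C l]).
- by move=> l; rewrite ffunE; case: eqP => [->|_]; [right|left].
- by left; exists i; rewrite ffunE eqxx.
Qed.

Lemma guard_captures_head P v : sorted e (rcons P v) -> cops_force e (guard P v) v.
Proof.
move=> sP; have k_gt0 : 0 < k by lia.
apply: (@cops_force_near _ _ (Ordinal k_gt0)); rewrite ffunE /= muln0.
case hP: (size P) => [|t]; first by left; move/size0nil: hP => ->.
right; move/(sortedP v): sP => /(_ t); rewrite size_rcons hP => /(_ (ltnSn _)).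
by rewrite subn1 /= !nth_rcons hP ltnSn ltnn eqxx.
Qed.

Lemma guard_step P v w (i : 'I_k) : sorted e (rcons P v) ->
  guard (rcons P v) w i = guard P v i \/ e (guard P v i) (guard (rcons P v) w i).
Proof.
move=> sP; rewrite !ffunE size_rcons subSS.
have nth_lt a : a < (size P).+1 -> nth w (rcons (rcons P v) w) a = nth v (rcons P v) a.
  by move=> aP; rewrite nth_rcons size_rcons aP; apply: set_nth_default; rewrite size_rcons.
case: (ltnP (3 * i) (size P)) => hi.
  right; rewrite nth_lt; last lia.
  by have := sortedP v sP (size P - (3 * i).+1); rewrite size_rcons subnSK //; apply; lia.
left; have -> : size P - (3 * i).+1 = size P - 3 * i by lia.
by rewrite nth_lt //; lia.
Qed.

(* Cop [(size Q - j) %/ 3] stands within one step of [Q_j]; this is where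
   spacing three and [n <= 3 k] are used. *)
Lemma guard_near Q w j : sorted e (rcons Q w) -> j < size Q -> size Q - j < n ->
  exists i, guard Q w i = nth w Q j \/ e (guard Q w i) (nth w Q j).
Proof.
move=> sQw jQ dist; have ik : (size Q - j) %/ 3 < k by lia.
exists (Ordinal ik); rewrite ffunE /=.
set a := size Q - _.+1.
have sQ : sorted e Q by move: sQw; rewrite -cats1 => /cat_sorted2[].
have aQ : a < size Q by lia.
rewrite nth_rcons aQ.
have : a = j \/ a = j.+1 \/ a.+1 = j by lia.
case=> [->|[aj|aj]]; [by left | right | right].
  by rewrite aj e_sym; apply: (sortedP w sQ); rewrite -aj.
by rewrite -aj; apply: (sortedP w sQ); rewrite aj.
Qed.

Lemma guard_force m P v r : #|T| <= size P + m ->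
  uniq (rcons P v) -> sorted e (rcons P v) -> connect (avoiding e P) v r ->
  cops_force e (guard P v) r.
Proof.
elim: m P v r => [|m IH] P v r hm uP sP vr.
  have := max_card (mem (rcons P v)); rewrite (card_uniqP uP) size_rcons => /leq_trans.
  by move=> /(_ _ hm); rewrite addn0 ltnn.
have [->|rv] := eqVneq r v; first exact: guard_captures_head.
have [w [evw wQ wr]] := connect_avoiding_step vr rv.
set Q := rcons P v in wQ wr *.
have sQw : sorted e (rcons Q w) := sorted_rcons sP evw.
have uQw : uniq (rcons Q w) by rewrite rcons_uniq wQ.
have rQ : r \notin Q := connect_avoiding_notin wr wQ.
apply: (@cf_move _ _ _ _ _ (guard Q w)) => [i|]; first exact: guard_step.
right=> r' rr'; have [r'Q|r'Q] := boolP (r' \in Q).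
  have {}rr' : e r r' by case: rr' => // r'r; rewrite -r'r r'Q in rQ.
  have jQ : index r' Q < size Q by rewrite index_mem.
  rewrite -(nth_index w r'Q) in rr' *.
  have [i near] := guard_near sQw jQ (chord_dist_lt uQw sQw wr jQ rr').
  exact: cops_force_near near.
apply: IH => //; first by rewrite size_rcons; lia.
case: rr' => [->//|rr']; apply: connect_trans wr (connect1 _).
by rewrite /avoiding /= rr' rQ r'Q.
Qed.

Lemma cops_win_component x : cops_win e (component e x) k.
Proof.
exists (guard [::] x); split=> [i|r]; first by rewrite ffunE /= inE connect0.
rewrite inE => xr; apply: (@guard_force #|T|) => //.
by rewrite (eq_connect (avoiding_nil e)).
Qed.

End GuardingPath.

Lemma classical_ex_minn (P : nat -> Prop) :
  (exists n, P n) -> exists m, P m /\ (forall j, P j -> m <= j).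
Proof.
move=> [n Pn]; apply: NNPP => no_min.
suff below : forall j i, i < j -> ~ P i by exact: (below n.+1 n).
elim=> [//|j IH] i; rewrite ltnS leq_eqVlt => /predU1P[->{i} Pj|/IH //].
apply: no_min; exists j; split=> // l Pl; rewrite leqNgt; apply/negP => /IH; exact.
Qed.

Lemma cop_number_conn_le (T : finType) (e : rel T) S k :
  0 < k -> cops_win e S k -> cop_number_conn e S <= k.
Proof.
move=> k_gt0 win.
have [m [[m_gt0 mwin] mmin]] :=
  classical_ex_minn (ex_intro (fun j => 0 < j /\ cops_win e S j) k (conj k_gt0 win)).
have [_ [_ least]] : is_least_win e S (cop_number_conn e S).
  by apply: epsilon_spec; exists m; do 2!split=> //; move=> j j_gt0 /(conj j_gt0) /mmin.
exact: least.
Qed.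

Theorem corollary15 (T : finType) (e : rel T)
  (e_sym : symmetric e) (e_irr : irreflexive e) (n : nat) :
  is_circumference e n -> 2 * cop_number e <= n.
Proof.
move=> [[c [_ n_gt2 _ _]] cycle_le].
have n_le_3k : n <= 3 * (n %/ 2) by lia.
suff cop_le : cop_number e <= n %/ 2 by lia.
apply/bigmax_leqP => x _.
apply: cop_number_conn_le (cops_win_component e_sym n_gt2 cycle_le n_le_3k x).
lia.
Qed.
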